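(* Let $p\ge1$, $X=\{0,1,\dots,p\}$, and $w=x_1x_2\cdots\in X^\infty\setminus\{0^\infty\}$; for $n\ge1$ let $w_n=x_1\cdots x_n$. Then $|\mathcal P^{w_n}_n|\le|\mathcal P^{w_{n+1}}_{n+1}|$ for every $n$ with $w_n\ne0^n$. Moreover $\lim_{n}|\mathcal P^{w_n}_n|<\infty$ if and only if $w$ is cofinal to a word in $\{0,i\}^\infty$ for some $i\in X$.
   Context: $\mathcal G_{S_p}$ is generated by $e_1,\dots,e_p$ acting on $X^\ast$ by $e_i(0w)=i\,e_i(w)$, $e_i(iw)=0w$, $e_i(jw)=jw$ for $j\notin\{0,i\}$. $\Gamma^p_n$ is the Schreier graph on $X^n$ with an edge labelled $e_j$ joining $v$ and $e_j(v)$ for all $v,j$. An $e_j$-cycle is the $\langle e_j\rangle$-orbit of a vertex with its $e_j$-labelled edges; $C_n^i$ is the $e_i$-cycle with vertex set $\{0,i\}^n$. Let $B_n$ be the bipartite graph whose vertices are the vertices of $\Gamma^p_n$ and the $e$-cycles of length $\ge2$, a vertex being joined to each such cycle containing it ($B_n$ is a tree). Removing $0^n$ from $\Gamma^p_n$ leaves $p$ components; the $i$-th petal contains $C_n^i\setminus\{0^n\}$. For $u\ne0^n$ in the $i$-th petal, the path of cycles $\mathcal P^u_n$ is the sequence of cycles met along the unique path in $B_n$ from $u$ to $C_n^i$, and $|\mathcal P^u_n|$ its number of cycles. Two infinite words are cofinal if they differ in only finitely many positions. *)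

From mathcomp Require Import all_boot.
Set Implicit Arguments. Unset Strict Implicit. Unset Printing Implicit Defensive.

Section Grigorchuk.
Variable p : nat.
Notation X := 'I_p.+1.
Definition x0 : X := ord0.

Fixpoint eseq (i : X) (s : seq X) : seq X :=
  match s with
  | [::] => [::]
  | x :: t => if x == x0 then i :: eseq i t
              else if x == i then x0 :: t else x :: t
  end.

Lemma size_eseq i s : size (eseq i s) = size s.
Proof.
elim: s => [|x t IH] //=.
by case: ifP => _ /=; [rewrite IH | case: ifP].
Qed.

Variable n : nat.
Definition word := (n.-tuple X).

Definition e (i : X) (v : word) : word := Tuple (introT eqP (etrans (size_eseq i v) (size_tuple v))).

Definition zero_word : word := [tuple of nseq n x0].

Definition gadj (u v : word) : bool :=
  [exists j : X, (j != x0) && ((e j u == v) || (e j v == u))].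

Definition Cset (i : X) : {set word} :=
  [set v : word | all (fun x => (x == x0) || (x == i)) v].

(* u lies in the i-th petal: component of Gamma minus 0^n containing C_n^i \ {0^n} *)
Definition avoid0 (u v : word) : bool :=
  [&& u != zero_word, v != zero_word & gadj u v].
Definition in_petal (i : X) (u : word) : bool :=
  [&& i != x0, u != zero_word &
     [exists v, [&& v \in Cset i, v != zero_word & connect avoid0 u v]]].

(* u and v lie on a common e_j-cycle of length >= 2 (a cycle node of B_n) *)
Definition share_cycle (u v : word) : bool :=
  [exists j : X, [&& j != x0, e j u != u & fconnect (e j) u v]].

Fixpoint reach (u : word) (k : nat) : {set word} :=
  if k is k'.+1 then
    reach u k' :|: [set v | [exists x in reach u k', share_cycle x v]]
  else [set u].

(* |P^u_n| : number of cycles on the (unique, hence shortest) path in B_n from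
   u to C_n^i, where i is the petal of u.  A path u, C_1, v_1, ..., v_{k-1}, C_k = C_n^i
   has k cycles and consists of k-1 cycle steps from u to v_{k-1} in C_n^i. *)
Definition petal_index (u : word) : X :=
  odflt x0 [pick i | in_petal i u].
Definition path_len (u : word) : nat :=
  (find (fun k => [exists v in reach u k, v \in Cset (petal_index u)])
        (iota 0 #|{: word}|.+1)).+1.

End Grigorchuk.

(* w_n = x_1 ... x_n, with w : nat -> X, w 0 = x_1 *)
Definition pref (p : nat) (w : nat -> 'I_p.+1) (n : nat) : n.-tuple 'I_p.+1 :=
  [tuple w (nat_of_ord k) | k < n].

Definition cofinal_to_0i (p : nat) (w : nat -> 'I_p.+1) (i : 'I_p.+1) : Prop :=
  exists v : nat -> 'I_p.+1,
    (forall m, (v m == ord0) || (v m == i)) /\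
    (exists N, forall m, N <= m -> w m = v m).

(* Record a word by the labels of its maximal blocks of nonzero letters, zeros
   being transparent ([nzruns]).  The generator e_j only rewrites the leading
   {0,j}-segment of a word, so these labels, with a leading j dropped, are
   constant on each e_j-cycle: one cycle of B_n changes the number of blocks by
   at most one, and the last label is constant on each component of Gamma
   minus 0^n, so it names the petal.  Conversely, going around the e_j-cycle of
   u, where j labels the first block of u, turns that block into zeros; hence
   |P^u_n| is exactly the number of blocks of u.  Along the prefixes of w this
   number is nondecreasing, and after time N it grows exactly when a new letter
   is neither 0 nor the current last label, which cofinality to {0,i}^oo
   forbids except for at most one growth step, to the label i. *)
From Stdlib Require Import Classical.
From mathcomp Require Import all_boot zify.
Set Implicit Arguments. Unset Strict Implicit. Unset Printing Implicit Defensive.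

Lemma find_iota_least (P : pred nat) (m K : nat) :
  P m -> m < K -> (forall k, P k -> m <= k) -> find P (iota 0 K) = m.
Proof.
move=> Pm ltmK least.
have hasP : has P (iota 0 K) by apply/hasP; exists m; rewrite ?mem_iota.
have ltfK : find P (iota 0 K) < K by move: hasP; rewrite has_find size_iota.
apply/eqP; rewrite eqn_leq; apply/andP; split.
  rewrite leqNgt; apply/negP => ltmf.
  by have := before_find 0 ltmf; rewrite nth_iota ?add0n ?Pm // (ltn_trans ltmf).
by apply: least; have := nth_find 0 hasP; rewrite nth_iota ?add0n.
Qed.

Lemma nondecreasing_bounded_eventually_const (f : nat -> nat) (B N : nat) :
  {homo f : m n / m <= n} -> (forall n, N <= n -> f n <= B) ->
  exists L M, forall n, M <= n -> f n = L.
Proof.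
move=> homo_f; move: {2}(B - f N) (leqnn (B - f N)) => k.
elim: k N => [|k IH] N gap bounded.
  exists (f N), N => n leNn; apply/eqP; rewrite eqn_leq (homo_f _ _ leNn) andbT.
  by have := bounded n leNn; lia.
case: (classic (exists n, N <= n /\ f N < f n)) => [[n [leNn growth]]|stable].
  apply: (IH n) => [|m lenm]; first by have := bounded n leNn; lia.
  by apply: bounded; apply: leq_trans lenm.
exists (f N), N => n leNn; apply/eqP; rewrite eqn_leq (homo_f _ _ leNn) andbT.
by rewrite leqNgt; apply/negP => growth; apply: stable; exists n.
Qed.

Section NonzeroRuns.
Variable p : nat.
Local Notation X := 'I_p.+1.
Local Notation z0 := (x0 p).

Definition zero_or (i : X) : pred X := fun x => (x == z0) || (x == i).

Definition drop_head (a : X) (l : seq X) : seq X :=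
  if l is b :: l' then (if b == a then l' else l) else l.

Fixpoint nzruns (s : seq X) : seq X :=
  if s is x :: t then (if x == z0 then nzruns t else x :: drop_head x (nzruns t))
  else [::].

Lemma size_drop_head_le (a : X) l : size (drop_head a l) <= size l.
Proof. by case: l => [|b l] //=; case: ifP. Qed.

Lemma size_drop_head_ge (a : X) l : size l <= (size (drop_head a l)).+1.
Proof. by case: l => [|b l] //=; case: ifP. Qed.

Lemma drop_head_eq_nil (a : X) l : drop_head a l = [::] -> l = [::] \/ l = [:: a].
Proof. by case: l => [|b [|c l]] //=; [left | case: ifP => // /eqP -> _; right | case: ifP]. Qed.

Lemma last_drop_head (a : X) l : drop_head a l != [::] -> last z0 (drop_head a l) = last z0 l.
Proof. by case: l => [|c [|d l]] //=; case: ifP. Qed.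

Lemma nzruns_neq0 (s : seq X) : all (predC1 z0) (nzruns s).
Proof.
elim: s => [|x t IH] //=; case: ifP => // xn /=; rewrite xn /=.
by case: (nzruns t) IH => [|b l] //=; case: ifP => // _ /andP [].
Qed.

Lemma nzruns_eq_nil (s : seq X) : (nzruns s == [::]) = all (pred1 z0) s.
Proof. by elim: s => [|x t IH] //=; case: (eqVneq x z0). Qed.

Lemma size_nzruns (s : seq X) : size (nzruns s) <= size s.
Proof.
elim: s => [|x t IH] //=; case: ifP => _ /=; first exact: leqW.
exact: leq_ltn_trans (size_drop_head_le _ _) _.
Qed.

Lemma nzruns_nseq0_cat k (r : seq X) : nzruns (nseq k z0 ++ r) = nzruns r.
Proof. by elim: k => [|k IH] //=; rewrite eqxx. Qed.

Lemma nzruns_zero_or (i : X) (s : seq X) :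
  all (zero_or i) s -> nzruns s = [::] \/ nzruns s = [:: i].
Proof.
elim: s => [|x t IH] /=; first by left.
case/andP => /orP [] /eqP -> /IH; first by rewrite eqxx.
by case: (eqVneq i z0) => // _ [] -> /=; right; rewrite ?eqxx.
Qed.

Lemma zero_or_nzruns (i : X) (s : seq X) : nzruns s = [:: i] -> all (zero_or i) s.
Proof.
elim: s => [|x t IH] //=.
case: (eqVneq x z0) => [->|xn] /=; first exact: IH.
case=> xi; subst i => /drop_head_eq_nil [|] runs_t; rewrite /zero_or eqxx orbT /=; last exact: IH.
move/eqP: runs_t; rewrite nzruns_eq_nil => /allP all0.
by apply/allP => y /all0 /eqP ->; rewrite eqxx.
Qed.

Lemma nzruns_rcons (s : seq X) (x : X) :
  nzruns (rcons s x) =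
  if zero_or (last z0 (nzruns s)) x then nzruns s else rcons (nzruns s) x.
Proof.
rewrite /zero_or; elim: s => [|a t IH] /=.
  by case: (eqVneq x z0) => [_|xn] //=; rewrite (negbTE xn).
case: (eqVneq a z0) => [_|an] //.
rewrite IH; case: (eqVneq x z0) => [_|xn] //=.
case E: (nzruns t) => [|b l] /=.
  by rewrite (negbTE xn) /=; case: (eqVneq x a) => [<-|xa].
case: (eqVneq b a) => [->|ba] /=.
  by case: (eqVneq x (last a l)) => [_|_] //=; rewrite eqxx.
by case: (eqVneq x (last b l)) => [_|_] //=; rewrite (negbTE ba).
Qed.

Section Generator.
Variable j : X.
Hypothesis j_neq0 : j != z0.

Lemma drop_head_nzruns_eseq (s : seq X) :
  drop_head j (nzruns (eseq j s)) = drop_head j (nzruns s).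
Proof.
elim: s => [|x t IH] //=.
case: (eqVneq x z0) => [_|xn] /=; first by rewrite (negbTE j_neq0) /= eqxx.
case: (eqVneq x j) => [->|xj] //=.
by rewrite (negbTE xn) /= (negbTE xj).
Qed.

Lemma drop_head_nzruns_iter_eseq (s : seq X) m :
  drop_head j (nzruns (iter m (eseq j) s)) = drop_head j (nzruns s).
Proof. by elim: m => [|m IH] //=; rewrite drop_head_nzruns_eseq. Qed.

Lemma last_nzruns_eseq (s : seq X) : nzruns s != [::] -> nzruns (eseq j s) != [::] ->
  last z0 (nzruns (eseq j s)) = last z0 (nzruns s).
Proof.
move=> ns nes; have inv := drop_head_nzruns_eseq s.
case E: (drop_head j (nzruns s)) inv => [|b l] inv.
  case/drop_head_eq_nil: inv => es; first by rewrite es in nes.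
  by case/drop_head_eq_nil: E => E; [rewrite E in ns | rewrite es E].
rewrite -(last_drop_head (a := j) (l := nzruns s)); last by rewrite E.
by rewrite E -inv last_drop_head // inv.
Qed.

Lemma iter_eseq_double k (t : seq X) :
  iter k.*2 (eseq j) (z0 :: t) = z0 :: iter k (eseq j) t.
Proof. by elim: k => [|k IH] //; rewrite doubleS !iterS IH /= (negbTE j_neq0) eqxx. Qed.

Lemma iter_eseq_clear (s1 r : seq X) : all (zero_or j) s1 ->
  exists m, iter m (eseq j) (s1 ++ r) = nseq (size s1) z0 ++ r.
Proof.
elim: s1 => [|a s1 IH] /=; first by exists 0.
case/andP => /orP [] /eqP -> /IH [m clear]; first by exists m.*2; rewrite iter_eseq_double clear.
by exists m.*2.+1; rewrite iterSr /= (negbTE j_neq0) eqxx iter_eseq_double clear.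
Qed.

End Generator.

Lemma nzruns_cons_split (s : seq X) (j : X) l : nzruns s = j :: l ->
  exists s1 r, [/\ s = s1 ++ r, all (zero_or j) s1 & nzruns r = l].
Proof.
elim: s l => [|x t IH] l //=.
case: (eqVneq x z0) => [->|xn].
  by case/IH => s1 [r [-> s1_j runs_r]]; exists (z0 :: s1), r; split=> //=.
case=> xj; subst j; case E: (nzruns t) => [|b l'] /=.
  by move=> <-; exists [:: x], t; rewrite /= /zero_or eqxx orbT E.
case: (eqVneq b x) E => [-> E runs_t|bx E <-].
  have [s1 [r [-> s1_x runs_r]]] := IH _ E.
  by exists (x :: s1), r; rewrite /= /zero_or eqxx orbT s1_x -runs_t.
by exists [:: x], t; rewrite /= /zero_or eqxx orbT E.
Qed.

Lemma eseq_first_run_neq (j : X) (s : seq X) l : nzruns s = j :: l -> eseq j s != s.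
Proof.
case: s => [|x t] //=.
case: (eqVneq x z0) => [->|xn].
  move=> runs_t; apply/negP => /eqP [] jz.
  by move: (nzruns_neq0 t); rewrite runs_t /= jz eqxx.
case=> <- _; rewrite eqxx; apply/eqP => [[]] /eqP.
by rewrite eq_sym (negbTE xn).
Qed.

End NonzeroRuns.

Section Schreier.
Variables p n : nat.
Local Notation X := 'I_p.+1.
Local Notation z0 := (x0 p).
Local Notation W := (word p n).

Lemma val_iter_e (j : X) (u : W) m : (iter m (e j) u : seq X) = iter m (eseq j) u.
Proof. by elim: m => [|m IH] //=; rewrite -IH. Qed.

Lemma zero_wordE (u : W) : (u == zero_word p n) = (nzruns u == [::]).
Proof.
rewrite nzruns_eq_nil; apply/eqP/all_pred1P => [->|u0]; first by rewrite /= size_nseq.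
by apply: val_inj; rewrite /= u0 size_tuple.
Qed.

Lemma share_cycle_size (x y : W) : share_cycle x y -> size (nzruns x) <= (size (nzruns y)).+1.
Proof.
case/existsP => j /and3P [jn _ xy].
pose inv := [pred z : W | drop_head j (nzruns z) == drop_head j (nzruns x)].
have inv_closed : closed (frel (e j)) inv.
  by move=> a b /eqP <-; rewrite !inE /= drop_head_nzruns_eseq.
have := closed_connect inv_closed xy; rewrite !inE /= eqxx => /esym/eqP inv_y.
by apply: leq_trans (size_drop_head_ge j _) _; rewrite -inv_y ltnS size_drop_head_le.
Qed.

Lemma reach_size (u v : W) k : v \in reach u k -> size (nzruns u) <= size (nzruns v) + k.
Proof.
elim: k v => [|k IH] v /=; first by rewrite inE => /eqP ->; rewrite addn0.
rewrite inE => /orP [/IH|]; first by move/leq_trans; apply; rewrite leq_add2l.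
rewrite inE => /existsP [x /andP [/IH ux /share_cycle_size xv]]; lia.
Qed.

Lemma reach_share (u u' v : W) k :
  share_cycle u u' -> v \in reach u' k -> v \in reach u k.+1.
Proof.
move=> uu'; elim: k v => [|k IH] v /=.
  rewrite inE => /eqP ->; rewrite !inE; apply/orP; right.
  by apply/existsP; exists u; rewrite inE eqxx.
rewrite inE => /orP [/IH vin|]; first by rewrite inE vin.
rewrite inE => /existsP [x /andP [xin xv]].
by rewrite !inE; apply/orP; right; apply/existsP; exists x; rewrite IH.
Qed.

Lemma connect_avoid0_iter_e (j : X) (u : W) m : j != z0 -> drop_head j (nzruns u) != [::] ->
  connect (@avoid0 p n) u (iter m (e j) u).
Proof.
move=> jn tail_u.
have nz i : iter i (e j) u != zero_word p n.
  rewrite zero_wordE val_iter_e; apply: contra tail_u => /eqP runs0.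
  by rewrite -(drop_head_nzruns_iter_eseq jn _ i) runs0.
elim: m => [|m IH]; first exact: connect0.
apply: connect_trans IH (connect1 _).
by rewrite /avoid0 !nz /=; apply/existsP; exists j; rewrite jn eqxx.
Qed.

Lemma last_nzruns_avoid0 (u v : W) :
  connect (@avoid0 p n) u v -> last z0 (nzruns v) = last z0 (nzruns u).
Proof.
move=> uv; pose inv := [pred z : W | last z0 (nzruns z) == last z0 (nzruns u)].
have inv_closed : closed (@avoid0 p n) inv.
  move=> a b /and3P [an bn /existsP [j /andP [jn /orP [] /eqP ab]]];
    rewrite -ab !zero_wordE in an bn *; rewrite !inE /= last_nzruns_eseq //.
have := closed_connect inv_closed uv; rewrite !inE /= eqxx => /esym/eqP //.
Qed.

Lemma in_petal_last i (u : W) : in_petal i u -> i = last z0 (nzruns u).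
Proof.
case/and3P => _ _ /existsP [v /and3P [vC vn uv]].
rewrite -(last_nzruns_avoid0 uv); rewrite inE in vC; rewrite zero_wordE in vn.
by case: (nzruns_zero_or vC) vn => ->.
Qed.

(* The witness walks along the e_j-cycle of the first block label j, which clears that block. *)
Lemma reach_last_run (u : W) : u != zero_word p n ->
  exists v : W, [/\ v \in reach u (size (nzruns u)).-1, nzruns v = [:: last z0 (nzruns u)]
                  & connect (@avoid0 p n) u v].
Proof.
rewrite zero_wordE -size_eq0; move sz: (size _) => [|k] //= _.
elim: k u sz => [|k IH] u.
  by case E: (nzruns u) => [|a [|b l]] // _; exists u; rewrite inE.
case E: (nzruns u) => [|j [|y l]] //= [size_l].
have [s1 [r [Eu s1_j runs_r]]] := nzruns_cons_split E.
have jn : j != z0 by move: (nzruns_neq0 u); rewrite E /= => /andP [].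
have [m clear] := iter_eseq_clear jn r s1_j.
have runs_u' : nzruns (iter m (e j) u) = y :: l by rewrite val_iter_e Eu clear nzruns_nseq0_cat.
have [|v [vin runs_v uv]] := IH (iter m (e j) u); first by rewrite runs_u' /= size_l.
exists v; split.
- apply: reach_share vin; apply/existsP; exists j.
  by rewrite jn fconnect_iter andbT -(inj_eq val_inj) (eseq_first_run_neq E).
- by rewrite runs_v runs_u'.
- by apply: connect_trans _ uv; apply: connect_avoid0_iter_e; rewrite // E /= eqxx.
Qed.

Lemma petal_indexE (u : W) : u != zero_word p n -> petal_index u = last z0 (nzruns u).
Proof.
move=> un; have [v [_ runs_v uv]] := reach_last_run un.
rewrite zero_wordE in un.
rewrite /petal_index; case: pickP => [i /in_petal_last -> //|no_petal].
suff : in_petal (last z0 (nzruns u)) u by rewrite no_petal.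
apply/and3P; split; last first.
- by apply/existsP; exists v; rewrite inE (zero_or_nzruns runs_v) zero_wordE runs_v.
- by rewrite zero_wordE.
case E: (nzruns u) un => [|a l] // _.
move: (nzruns_neq0 u); rewrite E => /allP; apply.
by rewrite /= mem_last.
Qed.

Lemma path_lenE (u : W) : u != zero_word p n -> path_len u = size (nzruns u).
Proof.
move=> un; have [v [vin runs_v _]] := reach_last_run un.
have /prednK : 0 < size (nzruns u) by rewrite lt0n size_eq0 -zero_wordE.
move: (size _).-1 vin => k vin size_u; rewrite /path_len -size_u; congr _.+1.
apply: find_iota_least.
- by apply/existsP; exists v; rewrite vin (petal_indexE un) inE (zero_or_nzruns runs_v).
- have p_gt0 : 0 < p.
    case E: (nzruns u) size_u => [|a l] // _; have := nzruns_neq0 u.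
    rewrite E /= -(inj_eq val_inj) /= -lt0n => /andP [a_gt0 _].
    by have := ltn_ord a; lia.
  rewrite card_tuple card_ord; have := size_nzruns u; rewrite size_tuple.
  by have := ltn_expl n (p_gt0 : 1 < p.+1); lia.
- move=> k' /existsP [v' /andP [v'in]]; rewrite inE => /nzruns_zero_or runs_v'.
  by have := reach_size v'in; case: runs_v' => -> /=; lia.
Qed.

End Schreier.

Section Prefixes.
Variables (p : nat) (w : nat -> 'I_p.+1).
Local Notation z0 := (x0 p).

Definition prefix_runs (n : nat) := nzruns (map w (iota 0 n)).

Lemma val_pref n : (pref w n : seq _) = map w (iota 0 n).
Proof. by rewrite /pref /= -val_enum_ord -map_comp. Qed.

Lemma prefix_runsS n :
  prefix_runs n.+1 = if zero_or (last z0 (prefix_runs n)) (w n) then prefix_runs n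
                     else rcons (prefix_runs n) (w n).
Proof. by rewrite /prefix_runs -[n.+1]addn1 iotaD add0n map_cat cats1 nzruns_rcons. Qed.

Lemma size_prefix_runs_homo : {homo (size \o prefix_runs) : m n / m <= n}.
Proof.
apply: homo_leq => [//|???|m]; first exact: leq_trans.
by rewrite /= prefix_runsS; case: ifP => // _; rewrite size_rcons.
Qed.

Lemma pref_eq0 n : (pref w n == zero_word p n) = (size (prefix_runs n) == 0).
Proof. by rewrite zero_wordE val_pref size_eq0. Qed.

Lemma pref_neq0_le m n : m <= n -> pref w m != zero_word p m -> pref w n != zero_word p n.
Proof. by rewrite !pref_eq0 -!lt0n => lemn /leq_trans; apply; apply: size_prefix_runs_homo. Qed.

Lemma pref_neq0 m : w m != z0 -> pref w m.+1 != zero_word p m.+1.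
Proof.
move=> wm; rewrite pref_eq0 prefix_runsS /zero_or (negbTE wm) /=.
by case: (prefix_runs m) => [|a l] /=; [rewrite (negbTE wm) | case: ifP].
Qed.

Lemma path_len_pref n : pref w n != zero_word p n -> path_len (pref w n) = size (prefix_runs n).
Proof. by move=> nz; rewrite path_lenE // val_pref. Qed.

Lemma prefix_runs_stable_zero_or L N :
  (forall n, N <= n -> size (prefix_runs n) = L) ->
  forall n, N <= n -> zero_or (last z0 (prefix_runs N)) (w n).
Proof.
move=> stable; have keep n : N <= n -> zero_or (last z0 (prefix_runs n)) (w n).
  move=> leNn; have := stable n.+1 (leqW leNn); rewrite prefix_runsS -(stable n leNn).
  by case: ifP => // _; rewrite size_rcons; lia.
have constant k : prefix_runs (N + k) = prefix_runs N.
  elim: k => [|k IH]; first by rewrite addn0.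
  by rewrite addnS prefix_runsS keep ?leq_addr.
by move=> m leNm; rewrite -(constant (m - N)) subnKC // keep.
Qed.

Lemma zero_or_prefix_runs i N :
  (forall n, N <= n -> zero_or i (w n)) ->
  forall n, N <= n -> prefix_runs n \in [:: prefix_runs N; rcons (prefix_runs N) i].
Proof.
move=> w_i n leNn; rewrite -(subnKC leNn).
elim: (n - N) => [|k IH]; first by rewrite addn0 mem_head.
rewrite addnS prefix_runsS /zero_or.
case/orP: (w_i (N + k) (leq_addr _ _)) => /eqP ->; first by rewrite eqxx.
rewrite orbC; move: IH; rewrite !inE => /orP [] /eqP ->; last by rewrite last_rcons eqxx eqxx orbT.
by case: ifP => _; rewrite eqxx ?orbT.
Qed.

Lemma prefix_runs_eventually_const_iff :
  (exists L N, forall n, N <= n -> size (prefix_runs n) = L) <->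
  (exists i, cofinal_to_0i w i).
Proof.
split=> [[L [N stable]]|[i [v [v_i [N w_v]]]]].
  have w_i := prefix_runs_stable_zero_or stable.
  exists (last z0 (prefix_runs N)), (fun m => if m < N then z0 else w m); split.
    by move=> m; case: ifP => [_|/negbT]; rewrite ?eqxx // -leqNgt => /w_i.
  by exists N => m leNm; rewrite ltnNge leNm.
apply: (nondecreasing_bounded_eventually_const (B := (size (prefix_runs N)).+1) (N := N)).
  exact: size_prefix_runs_homo.
move=> n leNn; have w_i m : N <= m -> zero_or i (w m) by move=> leNm; rewrite w_v //; apply: v_i.
have := zero_or_prefix_runs w_i leNn; rewrite !inE => /orP [] /eqP ->.
  exact: leqnSn.
by rewrite size_rcons.
Qed.

End Prefixes.

Lemma eventually_const_congr (f g : nat -> nat) M : (forall n, M <= n -> f n = g n) ->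
  (exists L N, forall n, N <= n -> f n = L) <-> (exists L N, forall n, N <= n -> g n = L).
Proof.
move=> fg; split=> [] [L [N const]]; exists L, (maxn M N) => n; rewrite geq_max => /andP [leM leN].
  by rewrite -fg // const.
by rewrite fg // const.
Qed.

Theorem proposition4p12 (p : nat) (w : nat -> 'I_p.+1) :
  0 < p ->
  (exists m, w m != ord0) ->
  (forall n, 0 < n -> pref w n != zero_word p n ->
     path_len (pref w n) <= path_len (pref w n.+1)) /\
  ((exists L N, forall n, N <= n -> path_len (pref w n) = L) <->
   (exists i : 'I_p.+1, cofinal_to_0i w i)).
Proof.
move=> _ [m0 wm0]; split=> [n _ nz|].
  rewrite !path_len_pref ?(pref_neq0_le (leqnSn n)) //.
  exact: size_prefix_runs_homo.
rewrite -prefix_runs_eventually_const_iff; apply: (eventually_const_congr (M := m0.+1)).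
by move=> n lemn; apply/path_len_pref/(pref_neq0_le lemn)/pref_neq0.
Qed.
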